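(* Let $\mathcal{A}=(a_i)_{i=1}^\infty$ be a weakly increasing sequence of positive integers, $r$ a positive integer and $k>2r$. Suppose that $\gcd A=1$ for all $(k-2r)$-multisubsets $A$ of $\{a_1,\ldots,a_k\}$. Then the sequence $(p_\mathcal{A}(n,k))_{n\ge0}$ is asymptotically $r$-log-concave.
   Context: The restricted partition function $p_\mathcal{A}(n,k)$ is defined by $\sum_{n\ge0}p_\mathcal{A}(n,k)x^n=\prod_{i=1}^k(1-x^{a_i})^{-1}$ (partitions of $n$ with parts in the multiset $\{a_1,\ldots,a_k\}$, equal values with different indices counting as distinct colors). A $j$-multisubset of $\{a_1,\ldots,a_k\}$ is a sub-multiset obtained by choosing $j$ of the $k$ indices. For a real sequence $\omega=(w_i)_{i\ge0}$ define $\widehat{\mathcal L}\omega=(w_{i+1}^2-w_iw_{i+2})_{i\ge0}$ and $\widehat{\mathcal L}^j\omega=\widehat{\mathcal L}(\widehat{\mathcal L}^{j-1}\omega)$. The sequence $\omega$ is asymptotically $r$-log-concave if there is $N$ such that $(\widehat{\mathcal L}^j\omega)_i>0$ for all $j\in\{1,\ldots,r\}$ and all $i\geq N$. *)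

From mathcomp Require Import all_boot all_order all_algebra.
Set Implicit Arguments. Unset Strict Implicit. Unset Printing Implicit Defensive.
Import Order.TTheory GRing.Theory Num.Theory.

(* p_A(n,k): number of partitions of n with parts among a_0,...,a_{k-1}
   (indices as colours), i.e. the coefficient of x^n in
   prod_{i<k} (1 - x^{a_i})^{-1}.  Defined by the recursion coming from
   multiplying by the last factor: the multiplicity j of part a_{k-1}
   satisfies j * a_{k-1} <= n.  (For a_{k-1} > 0.) *)
Fixpoint pA (a : nat -> nat) (k n : nat) : nat :=
  match k with
  | 0 => (n == 0)%N
  | k'.+1 => \sum_(0 <= j < (n %/ a k').+1) pA a k' (n - j * a k')
  end.

Definition Lhat (R : pzRingType) (w : nat -> R) : nat -> R :=
  fun i => (w i.+1 ^+ 2 - w i * w i.+2)%R.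

Definition Lhat_iter (R : pzRingType) (j : nat) (w : nat -> R) : nat -> R :=
  iter j (@Lhat R) w.

Definition asymp_r_log_concave (R : numDomainType) (r : nat) (w : nat -> R) : Prop :=
  exists N : nat, forall j i : nat, (1 <= j <= r)%N -> (N <= i)%N ->
    (0 < Lhat_iter j w i)%R.

From mathcomp Require Import all_boot all_order all_algebra all_field ring lra zify.
Set Implicit Arguments. Unset Strict Implicit. Unset Printing Implicit Defensive.
Import Order.TTheory GRing.Theory Num.Theory.

(* Let E be the shift of sequences and F n = p_A(n, k).  F is annihilated by
   chi(E), chi = prod_i (X^(a_i) - 1).  The gcd hypothesis says that a root of
   unity other than 1 is a root of chi of multiplicity < k - 2r, so chi divides
   (X - 1)^k (1 + X + ... + X^(L-1))^(k-2r-1) with L = prod_i a_i.  Splitting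
   along these coprime factors, F = p + G where p is a polynomial of degree
   < k and G is a quasi-polynomial of period L, hence G = O(n^(k-2r-2)).  The
   bound p_A(tL, k) >= binomial(t+k-1, k-1) forces p to have degree k-1 and a
   positive leading coefficient.
   Now if w = p + O(n^(deg p - h)) with h >= 2, then Lhat w equals the
   polynomial Lhat p = (Delta p)^2 - p Delta^2 p, of degree 2 deg p - 2 and
   leading coefficient deg p * lc(p)^2 > 0, up to O(n^(deg Lhat p - (h - 2))).
   Starting from h = 2r + 1, each Lhat^j F with j <= r is a polynomial with
   positive leading coefficient plus an error of lower order, hence
   eventually positive. *)

Lemma pA_rec (a : nat -> nat) k n : 0 < a k ->
  pA a k.+1 (n + a k) = pA a k (n + a k) + pA a k.+1 n.
Proof.
move=> ak_gt0 /=.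
have -> : (n + a k) %/ a k = (n %/ a k).+1.
  by rewrite -[X in (_ + X) %/ _](mul1n (a k)) divnDMl // addn1.
rewrite big_nat_recl //= mul0n subn0; congr (_ + _).
by apply: eq_bigr => j _; rewrite mulSn (addnC (a k)) subnDr.
Qed.

Lemma pA_at0 (a : nat -> nat) k : pA a k 0 = 1.
Proof. by elim: k => //= k IH; rewrite div0n big_nat1 IH. Qed.

Lemma pA_const1 j n : pA (fun=> 1) j.+1 n = 'C(n + j, j).
Proof.
have rec i m : pA (fun=> 1) i.+1 m.+1 = pA (fun=> 1) i m.+1 + pA (fun=> 1) i.+1 m.
  by have := pA_rec (a := fun=> 1) (k := i) m; rewrite addn1; apply.
elim: j n => [|j IHj] n.
  by elim: n => [|n IHn]; rewrite ?pA_at0 // rec IHn !bin0.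
elim: n => [|n IHn]; first by rewrite pA_at0 binn.
by rewrite rec IHn IHj !addSn addnS binS addnC.
Qed.

Lemma leq_sum_multiples (f : nat -> nat) b t : 0 < b ->
  \sum_(0 <= l < t.+1) f (l * b) <= \sum_(0 <= l < (t * b).+1) f l.
Proof.
move=> b_gt0; elim: t => [|t IH]; first by rewrite !big_nat1 mul0n.
rewrite big_nat_recr //= [leqRHS](@big_cat_nat _ _ _ (t * b).+1) //=; last first.
  by rewrite ltnS mulSn leq_addl.
apply: leq_add => //.
rewrite mulSn addnC big_nat_recr /=; last by rewrite -addn1 leq_add2l.
by rewrite leq_addl.
Qed.

(* Scaling every part of a partition of [t] by [L], each part [L] being split
   into [L / a_i] parts [a_i] of the corresponding colour, is injective. *)
Lemma pA_const1_leq (a : nat -> nat) L j t : 0 < L ->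
  (forall i, i < j -> a i %| L) -> (forall i, 0 < a i) ->
  pA (fun=> 1) j t <= pA a j (t * L).
Proof.
move=> L_gt0; elim: j t => [|j IH] t aL a_gt0.
  by rewrite /= muln_eq0 (negbTE (lt0n_neq0 L_gt0)) orbF.
have [b eb] : exists b, L = b * a j by exists (L %/ a j); rewrite divnK // aL.
have b_gt0 : 0 < b by move: L_gt0; rewrite eb muln_gt0 => /andP[].
rewrite /= divn1 eb mulnA mulnK //.
apply: leq_trans (leq_sum_multiples (fun l => pA a j (t * b * a j - l * a j)) t b_gt0).
rewrite big_nat [leqRHS]big_nat; apply: leq_sum => l /andP[_ lt].
rewrite muln1 -!mulnBl -mulnA -eb.
by apply: IH => // i ij; apply: aL; rewrite ltnS ltnW.
Qed.

Lemma expn_leq_ffact t m : t.+1 ^ m <= (t + m) ^_ m.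
Proof.
elim: m => [|m IH]; first by rewrite ffactn0.
by rewrite addnS ffactSS expnS leq_mul // ltnS leq_addr.
Qed.

Lemma expn_leq_fact_pA (a : nat -> nat) L m t : 0 < L ->
  (forall i, i <= m -> a i %| L) -> (forall i, 0 < a i) ->
  t.+1 ^ m <= m`! * pA a m.+1 (t * L).
Proof.
move=> L_gt0 aL a_gt0; apply: leq_trans (expn_leq_ffact t m) _.
rewrite -bin_ffact -pA_const1 mulnC leq_mul2l pA_const1_leq ?orbT //.
Qed.

Local Open Scope ring_scope.

Section DifferenceOperators.
Variable R : comNzRingType.
Implicit Types (p q : {poly R}) (f g : nat -> R).

Lemma sum_coef_widen p (F : nat -> R) N : (size p <= N)%N ->
  \sum_(i < size p) p`_i * F i = \sum_(i < N) p`_i * F i.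
Proof.
move=> pN; rewrite (big_ord_widen N (fun i => p`_i * F i) pN) big_mkcond /=.
by apply: eq_bigr => i _; case: ltnP => // /leq_sizeP-> //; rewrite mul0r.
Qed.

(* [diffop p f] is [p(E) f], where [E] is the shift [f |-> f \o succn]. *)
Definition diffop p f n : R := \sum_(i < size p) p`_i * f (n + i)%N.

Lemma diffop_widen p f n N : (size p <= N)%N ->
  diffop p f n = \sum_(i < N) p`_i * f (n + i)%N.
Proof. by move=> pN; rewrite /diffop (sum_coef_widen (fun i => f (n + i)%N) pN). Qed.

Lemma eq_diffop p f g n : f =1 g -> diffop p f n = diffop p g n.
Proof. by move=> fg; apply: eq_bigr => i _; rewrite fg. Qed.

Lemma diffop_eq0 p f n : f =1 (fun=> 0) -> diffop p f n = 0.
Proof. by move=> f0; rewrite /diffop big1 // => i _; rewrite f0 mulr0. Qed.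

Lemma diffopD p q f n : diffop (p + q) f n = diffop p f n + diffop q f n.
Proof.
set N := maxn (size p) (size q).
rewrite (@diffop_widen (p + q) f n N); last by rewrite (leq_trans (size_polyD _ _)).
rewrite (@diffop_widen p f n N) ?leq_maxl // (@diffop_widen q f n N) ?leq_maxr //.
by rewrite -big_split /=; apply: eq_bigr => i _; rewrite coefD mulrDl.
Qed.

Lemma diffopZ c p f n : diffop (c *: p) f n = c * diffop p f n.
Proof.
rewrite (@diffop_widen (c *: p) f n (size p)) ?size_scale_leq // /diffop mulr_sumr.
by apply: eq_bigr => i _; rewrite coefZ mulrA.
Qed.

Lemma diffopB p q f n : diffop (p - q) f n = diffop p f n - diffop q f n.
Proof. by rewrite diffopD -scaleN1r diffopZ mulN1r. Qed.

Lemma diffop1 f n : diffop 1 f n = f n.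
Proof. by rewrite /diffop size_poly1 big_ord1 coef1 mul1r addn0. Qed.

Lemma diffopMX p f n : diffop (p * 'X) f n = diffop p f n.+1.
Proof.
rewrite (@diffop_widen (p * 'X) f n (size p).+1); last first.
  by rewrite (leq_trans (size_polyMleq _ _)) // size_polyX addn2.
rewrite big_ord_recl coefMX /= mul0r add0r /diffop.
by apply: eq_bigr => i _; rewrite coefMX /= /bump /= add1n addnS addSn.
Qed.

Lemma diffop_shift p f m n : diffop p (fun x => f (x + m)%N) n = diffop p f (n + m)%N.
Proof. by apply: eq_bigr => i _; rewrite addnAC. Qed.

Lemma diffopM p q f n : diffop (p * q) f n = diffop p (diffop q f) n.
Proof.
elim/poly_ind: p q n => [|p c IH] q n.
  by rewrite mul0r /diffop size_poly0 !big_ord0.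
rewrite mulrDl diffopD -mulrA -(commr_polyX q) IH mul_polyC diffopZ diffopD.
rewrite diffopMX -[c%:P]mulr1 mul_polyC diffopZ diffop1.
congr (_ + _); rewrite -addn1 -diffop_shift.
by apply: eq_diffop => m; rewrite diffopMX addn1.
Qed.

Lemma diffopXn m f n : diffop 'X^m f n = f (n + m)%N.
Proof.
elim: m n => [|m IH] n; first by rewrite expr0 diffop1 addn0.
by rewrite exprSr diffopMX IH addSnnS.
Qed.

Lemma diffopXnB1 m f n : diffop ('X^m - 1) f n = f (n + m)%N - f n.
Proof. by rewrite diffopB diffopXn diffop1. Qed.

Lemma diffopXB1 f n : diffop ('X - 1) f n = f n.+1 - f n.
Proof. by rewrite -['X]expr1 diffopXnB1 addn1. Qed.

End DifferenceOperators.

Section PolynomialSequences.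
Variable R : numFieldType.
Implicit Types (p q : {poly R}) (f : nat -> R).

Definition pdelta p := p \Po ('X + 1) - p.

Lemma horner_pdelta p x : (pdelta p).[x] = p.[x + 1] - p.[x].
Proof. by rewrite /pdelta hornerD hornerN horner_comp !hornerE. Qed.

Lemma pdeltaD p q : pdelta (p + q) = pdelta p + pdelta q.
Proof. by rewrite /pdelta comp_polyD; ring. Qed.

Lemma pdeltaC c : pdelta c%:P = 0.
Proof. by rewrite /pdelta comp_polyC subrr. Qed.

Lemma coef_XaddC1_exp i j : (('X + 1 : {poly R}) ^+ i)`_j = 'C(i, j)%:R.
Proof.
rewrite exprD1n coef_sum.
under eq_bigr => l _ do rewrite coefMn coefXn.
case: (leqP j i) => ji.
  rewrite (bigD1 (Ordinal (leq_ltn_trans ji (ltnSn i)) : 'I_i.+1)) //= eqxx.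
  rewrite big1 ?addr0 // => l /= lj.
  rewrite eq_sym; case: eqP => [e|_]; last by rewrite mul0rn.
  by move: lj; rewrite -(inj_eq val_inj) /= e eqxx.
rewrite bin_small // big1 // => l _; case: eqP => [e|_]; last by rewrite mul0rn.
by move: (ltn_ord l); rewrite -e ltnS leqNgt ji.
Qed.

Lemma coef_pdelta p j :
  (pdelta p)`_j = \sum_(i < size p) p`_i * 'C(i, j)%:R - p`_j.
Proof.
rewrite /pdelta coefB comp_polyE coef_sum; congr (_ - _).
by apply: eq_bigr => i _; rewrite coefZ coef_XaddC1_exp.
Qed.

Lemma size_leq_coef0 p m : (size p <= m.+1)%N -> p`_m = 0 -> (size p <= m)%N.
Proof.
move=> pm pm0; apply/leq_sizeP => j mj.
case: (ltngtP j m) => [jm|mj'|-> //]; first by move: mj; rewrite leqNgt jm.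
exact: (leq_sizeP _ _ pm).
Qed.

Lemma size_coef_pdelta p m : (size p <= m.+1)%N ->
  (size (pdelta p) <= m)%N /\ (pdelta p)`_m.-1 = m%:R * p`_m.
Proof.
move=> pm; split.
  apply/leq_sizeP => j mj.
  rewrite coef_pdelta (sum_coef_widen (fun i => 'C(i, j)%:R) pm) big_ord_recr /=.
  rewrite big1 => [|i _]; last by rewrite bin_small ?mulr0 // (leq_trans (ltn_ord i)).
  rewrite add0r; case: (ltngtP j m) => jm.
  - by move: mj; rewrite leqNgt jm.
  - by rewrite bin_small // mulr0 (leq_sizeP _ _ pm) ?subrr.
  - by rewrite jm binn mulr1 subrr.
case: m pm => [|m] pm /=.
  rewrite mul0r coef_pdelta (sum_coef_widen (fun i => 'C(i, 0)%:R) pm).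
  by rewrite big_ord1 bin0 mulr1 subrr.
rewrite coef_pdelta (sum_coef_widen (fun i => 'C(i, m)%:R) pm) !big_ord_recr /=.
rewrite big1 => [|i _]; last by rewrite bin_small ?mulr0.
by rewrite binn binSn mulr1 add0r addrAC subrr add0r mulrC.
Qed.

Lemma size_coefM_top p q m n : (size p <= m.+1)%N -> (size q <= n.+1)%N ->
  (size (p * q)%R <= (m + n).+1)%N /\ (p * q)`_(m + n) = p`_m * q`_n.
Proof.
move=> pm qn; split; first by apply: (leq_trans (size_polyMleq p q)); lia.
rewrite coefM (bigD1 (Ordinal (leq_ltn_trans (leq_addr n m) (ltnSn _)))) //= addKn.
rewrite big1 ?addr0 // => j jm; case: (ltngtP j m) => mj.
- by rewrite (leq_sizeP _ _ qn) ?mulr0 // ltn_subRL ltn_add2r.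
- by rewrite (leq_sizeP _ _ pm) ?mul0r.
- by move: jm; rewrite -(inj_eq val_inj) /= mj eqxx.
Qed.

Lemma pdelta_onto q m : (size q <= m)%N ->
  exists2 Q : {poly R}, (size Q <= m.+1)%N & pdelta Q = q.
Proof.
elim: m q => [|m IH] q qm.
  move: qm; rewrite leqn0 size_poly_eq0 => /eqP ->.
  by exists 0; rewrite ?size_poly0 // -polyC0 pdeltaC.
pose Q0 : {poly R} := (q`_m / m.+1%:R) *: 'X^(m.+1).
have Q0m : (size Q0 <= m.+2)%N by rewrite (leq_trans (size_scale_leq _ _)) ?size_polyXn.
have [dQ0m topQ0] := size_coef_pdelta Q0m.
have qQ0m : (size (q - pdelta Q0)%R <= m)%N.
  apply: size_leq_coef0.
    by rewrite (leq_trans (size_polyD _ _)) // size_polyN geq_max qm (leq_trans dQ0m).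
  by rewrite coefB topQ0 coefZ coefXn eqxx mulr1 mulrC divfK ?subrr // pnatr_eq0.
have [Q1 Q1m dQ1] := IH _ qQ0m.
exists (Q0 + Q1); last by rewrite pdeltaD dQ1 addrC subrK.
by rewrite (leq_trans (size_polyD _ _)) // geq_max Q0m (leq_trans Q1m).
Qed.

Lemma diffop_XB1_exp_eq0 k f : (forall n, diffop (('X - 1) ^+ k) f n = 0) ->
  exists2 p : {poly R}, (size p <= k)%N & forall n, f n = p.[n%:R].
Proof.
elim: k f => [|k IH] f fk.
  exists 0 => [|n]; first by rewrite size_poly0.
  by rewrite horner0 -(fk n) expr0 diffop1.
have [q qk Dq] : exists2 q : {poly R}, (size q <= k)%N &
    forall n, f n.+1 - f n = q.[n%:R].
  apply: IH => n; rewrite -(eq_diffop _ _ (diffopXB1 f)).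
  by rewrite -diffopM -exprSr fk.
have [Q Qk dQ] := pdelta_onto qk.
exists (Q + (f 0%N - Q.[0])%:P).
  by rewrite (leq_trans (size_polyD _ _)) // geq_max Qk (leq_trans (size_polyC_leq1 _)).
have fQ n : f n - Q.[n%:R] = f 0%N - Q.[0].
  elim: n => [//|n <-]; rewrite -[f n.+1](subrK (f n)) Dq -dQ horner_pdelta -natr1.
  by ring.
by move=> n; rewrite hornerD hornerC -(fQ n) addrC subrK.
Qed.

Definition Lhat_poly p := pdelta p ^+ 2 - p * pdelta (pdelta p).

Lemma horner_Lhat_poly p (n : nat) :
  (Lhat_poly p).[n%:R] = p.[n.+1%:R] ^+ 2 - p.[n%:R] * p.[n.+2%:R].
Proof.
rewrite /Lhat_poly hornerD hornerN hornerM expr2 hornerM !horner_pdelta.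
by rewrite -!natr1 -!addrA (_ : 1 + 1 = 2%:R :> R) //; ring.
Qed.

Lemma size_coef_Lhat_poly p e : (size p <= e.+3)%N ->
  (size (Lhat_poly p) <= (e + e).+3)%N /\
  (Lhat_poly p)`_(e + e).+2 = e.+2%:R * p`_e.+2 ^+ 2.
Proof.
move=> pe.
have [dpe dpeE] := size_coef_pdelta pe; rewrite /= in dpeE.
have [ddpe ddpeE] := size_coef_pdelta dpe; rewrite /= dpeE in ddpeE.
have [dpdp dpdpE] := size_coefM_top dpe dpe.
have [pddp pddpE] := size_coefM_top pe ddpe.
rewrite /Lhat_poly expr2; split.
  rewrite (leq_trans (size_polyD _ _)) // size_polyN geq_max.
  by rewrite (leq_trans dpdp) ?(leq_trans pddp) //; lia.
rewrite coefB (_ : (e + e).+2 = e.+1 + e.+1)%N; last lia.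
rewrite dpdpE (_ : (e.+1 + e.+1 = e.+2 + e)%N); last lia.
by rewrite pddpE dpeE ddpeE -!natr1; ring.
Qed.

Lemma diffop_coprime_split p q f : coprimep p q ->
  (forall n, diffop (p * q) f n = 0) ->
  exists g h, [/\ forall n, f n = g n + h n,
    forall n, diffop p g n = 0 & forall n, diffop q h n = 0].
Proof.
move=> /Bezout_eq1_coprimepP[[u v] /= Duv] pqf.
exists (diffop (v * q) f), (diffop (u * p) f); split=> n.
- by rewrite -diffopD addrC Duv diffop1.
- by rewrite -diffopM mulrCA diffopM diffop_eq0.
- by rewrite -diffopM mulrCA (mulrC q) diffopM diffop_eq0.
Qed.

Definition geom_poly (L : nat) : {poly R} := \sum_(i < L) 'X^i.

Lemma XB1_geom_poly L : ('X - 1) * geom_poly L = 'X^L - 1.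
Proof. by rewrite subrX1. Qed.

Lemma coprimep_XB1_geom_poly k m L : (0 < L)%N ->
  coprimep (('X - 1) ^+ k) (geom_poly L ^+ m).
Proof.
move=> L_gt0; apply: coprimep_expl; apply: coprimep_expr.
rewrite coprimep_sym -polyC1 coprimep_XsubC rootE /geom_poly horner_sum.
under eq_bigr => i _ do rewrite hornerXn expr1n.
by rewrite sumr_const card_ord pnatr_eq0 -lt0n L_gt0.
Qed.

End PolynomialSequences.

Section PartitionDifferenceOperator.
Variable R : numFieldType.
Variable a : nat -> nat.
Hypothesis a_gt0 : forall i, (0 < a i)%N.

Definition pA_seq k n : R := (pA a k n)%:R.

Definition chi k : {poly R} := \prod_(i < k) ('X^(a i) - 1).

Lemma diffop_chi_pA k n : (0 < k)%N -> diffop (chi k) (pA_seq k) n = 0.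
Proof.
have chiS j m : diffop (chi j.+1) (pA_seq j.+1) m = diffop (chi j) (pA_seq j) (m + a j)%N.
  rewrite /chi big_ord_recr /= diffopM -diffop_shift; apply: eq_diffop => l.
  by rewrite diffopXnB1 /pA_seq pA_rec // natrD addrK.
have chi_succ j m : diffop (chi j) (pA_seq j) m.+1 = 0.
  elim: j m => [|j IH] m; first by rewrite /chi big_ord0 diffop1.
  by rewrite chiS addSn IH.
by case: k => // k _; rewrite chiS -(prednK (a_gt0 k)) addnS chi_succ.
Qed.

Definition cyclo (d : nat) : {poly R} := map_poly intr 'Phi_d.

Lemma XnB1_prod_cyclo n : (0 < n)%N -> 'X^n - 1 = \prod_(d <- divisors n) cyclo d.
Proof.
move=> n_gt0; rewrite /cyclo -rmorph_prod prod_Cyclotomic // rmorphB rmorph1 /=.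
by rewrite map_polyXn.
Qed.

Lemma cyclo1 : cyclo 1 = 'X - 1.
Proof. by rewrite -['X]expr1 XnB1_prod_cyclo // big_seq1. Qed.

Lemma filter_divisors m L : (0 < L)%N -> (m %| L)%N ->
  [seq d <- divisors L | (d %| m)%N] = divisors m.
Proof.
move=> L_gt0 mL; have m_gt0 : (0 < m)%N by apply: dvdn_gt0 L_gt0 mL.
apply: (irr_sorted_eq ltn_trans ltnn).
- exact: (sorted_filter ltn_trans _ (sorted_divisors_ltn L)).
- exact: sorted_divisors_ltn.
- move=> d; rewrite mem_filter -!dvdn_divisors //.
  by apply/idP/idP => [/andP[]//|dm]; rewrite dm (dvdn_trans dm mL).
Qed.

Lemma chi_prod_cyclo k L : (0 < L)%N -> (forall i : 'I_k, a i %| L)%N ->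
  chi k = \prod_(d <- divisors L) cyclo d ^+ #|[set i : 'I_k | (d %| a i)%N]|.
Proof.
move=> L_gt0 aL; rewrite /chi.
transitivity (\prod_(i < k) \prod_(d <- divisors L) (if (d %| a i)%N then cyclo d else 1)).
  apply: eq_bigr => i _; rewrite XnB1_prod_cyclo // -(filter_divisors L_gt0 (aL i)).
  by rewrite big_filter big_mkcond.
rewrite exchange_big /=; apply: eq_bigr => d _.
by rewrite -prodr_const -big_mkcond /=; apply: eq_bigl => i; rewrite inE.
Qed.

Lemma card_dvdn_lt k s d :
  (forall S : {set 'I_k}, #|S| = s -> \big[gcdn/0%N]_(i in S) a i = 1%N) ->
  d != 1%N -> (#|[set i : 'I_k | (d %| a i)%N]| < s)%N.
Proof.
move=> gcd1 d_neq1; rewrite ltnNge; apply/negP => /card_geqP[t [t_uniq t_size tA]].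
have := gcd1 [set i in t]; rewrite cardsE (card_uniqP t_uniq) t_size => /(_ erefl).
have : (d %| \big[gcdn/0%N]_(i in [set i in t]) a i)%N.
  by apply/dvdn_biggcdP => i; rewrite inE => /tA; rewrite inE.
by move=> /[swap] ->; rewrite dvdn1 (negbTE d_neq1).
Qed.

(* The root [1] of [chi k] has multiplicity [k]; every other root of unity is a
   root of multiplicity [< s], since [s] of the [a i] have no common divisor. *)
Lemma chi_dvdp k s L : (0 < L)%N -> (forall i : 'I_k, a i %| L)%N -> (0 < s <= k)%N ->
  (forall S : {set 'I_k}, #|S| = s -> \big[gcdn/0%N]_(i in S) a i = 1%N) ->
  chi k %| ('X - 1) ^+ (k - s).+1 * ('X^L - 1) ^+ s.-1.
Proof.
move=> L_gt0 aL /andP[s_gt0 sk] gcd1.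
have d1 : 1%N \in divisors L by rewrite -dvdn_divisors.
rewrite (chi_prod_cyclo L_gt0 aL) (bigD1_seq 1%N d1 (divisors_uniq L)) /=.
rewrite XnB1_prod_cyclo // (bigD1_seq 1%N d1 (divisors_uniq L)) /= exprMn -prodrXl.
rewrite cyclo1 mulrA -exprD.
have -> : [set i : 'I_k | (1 %| a i)%N] = [set: 'I_k].
  by apply/setP => i; rewrite !inE dvd1n.
rewrite cardsT card_ord (_ : ((k - s).+1 + s.-1 = k)%N); last lia.
apply: dvdp_mul; first exact: dvdpp.
apply: (big_ind2 (fun p q => p %| q)) => [|p1 p2 q1 q2|d d_neq1]; first exact: dvdpp.
  exact: dvdp_mul.
apply: dvdp_exp2l.
by rewrite -ltnS prednK //; apply: card_dvdn_lt.
Qed.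

Lemma pA_seq_annihilator k s L : (0 < L)%N -> (forall i : 'I_k, a i %| L)%N ->
  (0 < s <= k)%N ->
  (forall S : {set 'I_k}, #|S| = s -> \big[gcdn/0%N]_(i in S) a i = 1%N) ->
  forall n, diffop (('X - 1) ^+ k * geom_poly R L ^+ s.-1) (pA_seq k) n = 0.
Proof.
move=> L_gt0 aL sk gcd1 n; have := chi_dvdp L_gt0 aL sk gcd1.
case/andP: sk => s_gt0 sk; rewrite -XB1_geom_poly exprMn mulrA -exprD.
rewrite (_ : ((k - s).+1 + s.-1 = k)%N) => [chi_dvd|]; last lia.
rewrite -(divpK chi_dvd) diffopM diffop_eq0 // => l.
by apply: diffop_chi_pA; apply: leq_trans sk.
Qed.

End PartitionDifferenceOperator.

Section Asymptotics.
Variable R : archiRealFieldType.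
Implicit Types (p : {poly R}) (w : nat -> R).

Lemma eventually_nat_gt (x : R) : exists N, forall n, (N <= n)%N -> x < n.+1%:R.
Proof.
exists (Num.Def.archi_bound `|x|) => n Nn.
apply: le_lt_trans (ler_norm x) (lt_le_trans (archi_boundP (normr_ge0 x)) _).
by rewrite ler_nat (leq_trans Nn).
Qed.

Lemma poly_nat_bound p m : (size p <= m.+1)%N ->
  exists2 K, 0 <= K & forall n : nat, `|p.[n%:R]| <= K * n.+1%:R ^+ m.
Proof.
move=> pm; exists (\sum_(i < size p) `|p`_i|) => [|n]; first exact: sumr_ge0.
rewrite horner_coef mulr_suml; apply: le_trans (ler_norm_sum _ _ _) _.
apply: ler_sum => i _; rewrite normrM normrX ler_wpM2l //.
have nS : `|n%:R : R| <= n.+1%:R by rewrite ger0_norm // ler_nat.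
apply: le_trans (lerXn2r _ _ _ nS) _; rewrite ?nnegrE //.
by apply: ler_weXn2l; rewrite ?ler1n // -ltnS (leq_trans (ltn_ord i)).
Qed.

Lemma poly_nat_lower p m : (size p <= m.+1)%N -> 0 < p`_m ->
  exists N, forall n, (N <= n)%N -> p`_m / 2 * n.+1%:R ^+ m <= p.[n%:R].
Proof.
move=> pm c_gt0; set c := p`_m in c_gt0 *.
set q := p - c *: ('X + 1) ^+ m.
have qm : (size q <= m)%N.
  apply: size_leq_coef0; last by rewrite coefB coefZ coef_XaddC1_exp binn mulr1 subrr.
  rewrite (leq_trans (size_polyD _ _)) // size_polyN geq_max pm /=.
  rewrite (leq_trans (size_scale_leq _ _)) // (leq_trans (size_poly_exp_leq _ _)) //.
  by rewrite size_XaddC /= mul1n.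
have Dp (n : nat) : p.[n%:R] = c * n.+1%:R ^+ m + q.[n%:R].
  by rewrite /q hornerD hornerN hornerZ horner_exp hornerD hornerX hornerC natr1 addrC subrK.
clearbody q c; case: m pm qm Dp => [|m] _ qm Dp.
  exists 0%N => n _; move: qm; rewrite leqn0 size_poly_eq0 => /eqP q0.
  rewrite Dp q0 horner0 addr0 !expr0 !mulr1; lra.
have [K K_ge0 qK] := poly_nat_bound qm.
have [N KN] := eventually_nat_gt (2 * K / c).
exists N => n Nn; rewrite Dp; set X := n.+1%:R.
have X_gt0 : 0 < X by rewrite ltr0n.
have Xm_gt0 : 0 < X ^+ m by rewrite exprn_gt0.
have KX : 2 * K < c * X by rewrite -ltr_pdivrMl // mulrC; exact: KN.
have qX : - (K * X ^+ m) <= q.[n%:R] by rewrite lerNl (le_trans _ (qK n)) // -normrN ler_norm.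
have : K * X ^+ m <= c / 2 * X * X ^+ m by rewrite ler_pM2r //; lra.
rewrite exprS; nra.
Qed.

(* [w n - p(n) = O(n^(d - h))]; the exponents are kept apart since [d < h] occurs. *)
Definition near_poly w p (d h : nat) :=
  exists C, forall n, `|w n - p.[n%:R]| * n.+1%:R ^+ h <= C * n.+1%:R ^+ d.

Definition poly_asymp w (d h : nat) :=
  exists2 p : {poly R}, (size p <= d.+1)%N /\ 0 < p`_d & near_poly w p d h.

Lemma near_poly_C_ge0 w p d h C :
  (forall n, `|w n - p.[n%:R]| * n.+1%:R ^+ h <= C * n.+1%:R ^+ d) -> 0 <= C.
Proof. by move/(_ 0%N); rewrite !expr1n !mulr1; apply: le_trans. Qed.

Lemma near_poly_divX2 w p d h : near_poly w p d.+2 h.+2 -> near_poly w p d h.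
Proof.
case=> C wpC; exists C => n; have X_gt0 : 0 < n.+1%:R :> R by rewrite ltr0n.
by have := wpC n; rewrite -addn2 -(addn2 d) !exprD !mulrA !ler_pM2r.
Qed.

Lemma Lhat_perturb_bound (w0 w1 w2 P0 P1 P2 K B Y Z : R) :
  0 <= K -> 0 <= B -> 1 <= Y -> 0 <= Z ->
  `|P0| <= K * Z -> `|P1| <= K * Z -> `|P2| <= K * Z ->
  `|w0 - P0| * Y <= B * Z -> `|w1 - P1| * Y <= B * Z -> `|w2 - P2| * Y <= B * Z ->
  `|w1 ^+ 2 - w0 * w2 - (P1 ^+ 2 - P0 * P2)| * Y
    <= (4%:R * K * B + 2%:R * B * B) * Z ^+ 2.
Proof.
move=> K_ge0 B_ge0 Y_ge1 Z_ge0 P0K P1K P2K.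
set E0 := w0 - P0; set E1 := w1 - P1; set E2 := w2 - P2 => E0B E1B E2B.
have Y_ge0 : 0 <= Y := le_trans ler01 Y_ge1.
have EB (E : R) : `|E| * Y <= B * Z -> `|E| <= B * Z.
  by move=> EYB; apply: le_trans EYB; rewrite ler_peMr.
have KZ_ge0 : 0 <= K * Z by rewrite mulr_ge0.
have -> : w1 ^+ 2 - w0 * w2 - (P1 ^+ 2 - P0 * P2) =
  2%:R * P1 * E1 + E1 * E1 - P0 * E2 - E0 * P2 - E0 * E2 by rewrite /E0 /E1 /E2; ring.
have t1 : `|2%:R * P1 * E1| * Y <= 2%:R * (K * Z * (B * Z)).
  rewrite !normrM ger0_norm // -!mulrA ler_wpM2l // (mulrA K).
  by apply: ler_pM; rewrite ?mulr_ge0.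
have t2 : `|E1 * E1| * Y <= B * Z * (B * Z).
  by rewrite normrM -(mulrA `|E1|); apply: ler_pM => //; [exact: mulr_ge0|exact: EB].
have t3 : `|P0 * E2| * Y <= K * Z * (B * Z).
  by rewrite normrM -(mulrA `|P0|); apply: ler_pM => //; exact: mulr_ge0.
have t4 : `|E0 * P2| * Y <= K * Z * (B * Z).
  by rewrite normrM (mulrC `|E0|) -(mulrA `|P2|); apply: ler_pM => //; exact: mulr_ge0.
have t5 : `|E0 * E2| * Y <= B * Z * (B * Z).
  by rewrite normrM -(mulrA `|E0|); apply: ler_pM => //; [exact: mulr_ge0|exact: EB].
have tri : `|2%:R * P1 * E1 + E1 * E1 - P0 * E2 - E0 * P2 - E0 * E2| <=
    `|2%:R * P1 * E1| + `|E1 * E1| + `|P0 * E2| + `|E0 * P2| + `|E0 * E2|.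
  do 3! (apply: le_trans (ler_normB _ _) _; rewrite lerD2r).
  exact: ler_normD.
apply: le_trans (ler_wpM2r Y_ge0 tri) _.
have -> : (4%:R * K * B + 2%:R * B * B) * Z ^+ 2 = 2%:R * (K * Z * (B * Z)) +
    B * Z * (B * Z) + K * Z * (B * Z) + K * Z * (B * Z) + B * Z * (B * Z) by ring.
rewrite !(mulrDl _ _ Y); lra.
Qed.

Lemma near_poly_Lhat w p d h : (size p <= d.+1)%N -> near_poly w p d h ->
  near_poly (Lhat w) (Lhat_poly p) (d + d) h.
Proof.
move=> pd [C wpC]; have C_ge0 := near_poly_C_ge0 wpC.
have [K K_ge0 pK] := poly_nat_bound pd.
have c3_ge0 : 0 <= 3%:R ^+ d :> R by rewrite exprn_ge0.
exists (4%:R * (K * 3%:R ^+ d) * (C * 3%:R ^+ d) + 2%:R * (C * 3%:R ^+ d) * (C * 3%:R ^+ d)).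
move=> n; set X := n.+1%:R : R.
have X_ge1 : 1 <= X by rewrite ler1n.
have X_ge0 : 0 <= X := le_trans ler01 X_ge1.
have near_bounds i : (i <= 2)%N -> `|p.[(n + i)%:R]| <= K * 3%:R ^+ d * X ^+ d /\
    `|w (n + i)%N - p.[(n + i)%:R]| * X ^+ h <= C * 3%:R ^+ d * X ^+ d.
  move=> i2; have Xi : X <= (n + i).+1%:R by rewrite ler_nat; lia.
  have Xid : (n + i).+1%:R ^+ d <= 3%:R ^+ d * X ^+ d.
    rewrite -exprMn; apply: lerXn2r; rewrite ?nnegrE ?mulr_ge0 ?ler0n //.
    by rewrite /X -natrM ler_nat; lia.
  split; rewrite -mulrA; first exact: le_trans (pK _) (ler_wpM2l K_ge0 Xid).
  apply: le_trans (le_trans _ (wpC _)) (ler_wpM2l C_ge0 Xid).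
  by apply: ler_wpM2l => //; apply: lerXn2r; rewrite ?nnegrE.
have [P0K E0B] := near_bounds 0%N isT; have [P1K E1B] := near_bounds 1%N isT.
have [P2K E2B] := near_bounds 2%N isT.
rewrite addn0 in P0K E0B; rewrite addn1 in P1K E1B; rewrite addn2 in P2K E2B.
rewrite /Lhat horner_Lhat_poly exprD -expr2.
by apply: Lhat_perturb_bound; rewrite ?mulr_ge0 ?exprn_ge0 ?exprn_ege1.
Qed.

Lemma poly_asymp_Lhat w d h :
  poly_asymp w d.+2 h.+2 -> poly_asymp (Lhat w) (d + d).+2 h.
Proof.
case=> p [pd c_gt0] wp; have [Lpd LpE] := size_coef_Lhat_poly pd.
exists (Lhat_poly p); first by rewrite LpE mulr_gt0 ?ltr0n ?exprn_gt0.
by apply: near_poly_divX2; have := near_poly_Lhat pd wp; rewrite !addSn !addnS.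
Qed.

Lemma poly_asymp_Lhat_iter w d r j : poly_asymp w d.+2 r.*2.+1 -> (j <= r)%N ->
  exists e, poly_asymp (Lhat_iter j w) e.+2 (r - j).*2.+1.
Proof.
move=> wd; elim: j => [|j IH] jr; first by exists d; rewrite subn0.
have [e we] := IH (ltnW jr); exists (e + e)%N; apply: poly_asymp_Lhat.
by rewrite (_ : (r - j).*2.+1 = (r - j.+1).*2.+3)%N in we; last lia.
Qed.

Lemma poly_asymp_eventually_gt0 w d h :
  poly_asymp w d h.+1 -> exists N, forall n, (N <= n)%N -> 0 < w n.
Proof.
case=> p [pd c_gt0] [C wpC]; set c := p`_d in c_gt0.
have [N1 pN1] := poly_nat_lower pd c_gt0.
have [N2 CN2] := eventually_nat_gt (2 * C / c).
exists (maxn N1 N2) => n; rewrite geq_max => /andP[N1n N2n].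
have := pN1 n N1n; have := CN2 n N2n; have := wpC n.
set X := n.+1%:R; set Z := X ^+ d; rewrite -/c => wpXZ CX pZ.
have X_ge1 : 1 <= X by rewrite ler1n.
have Z_gt0 : 0 < Z by rewrite exprn_gt0 // (lt_le_trans ltr01).
have wpX : (p.[n%:R] - w n) * X <= C * Z.
  apply: le_trans wpXZ; apply: le_trans (ler_wpM2r _ (ler_norm _)) _.
    exact: le_trans ler01 X_ge1.
  by rewrite distrC ler_wpM2l // ler_eXnr.
have {}CX : 2 * C < c * X by rewrite -ltr_pdivrMl // mulrC.
have cZX : 0 < c / 2 * Z * X - C * Z.
  rewrite (_ : c / 2 * Z * X - C * Z = Z * (c * X - 2 * C) / 2); last by field.
  by rewrite divr_gt0 // mulr_gt0 // subr_gt0.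
have pZX : c / 2 * Z * X <= p.[n%:R] * X.
  by rewrite ler_wpM2r // (le_trans ler01).
have : 0 < w n * X by lra.
by rewrite pmulr_lgt0 // (lt_le_trans ltr01).
Qed.

Lemma eventually_forall_leq (P : nat -> nat -> Prop) r :
  (forall j, (1 <= j <= r)%N -> exists N, forall n, (N <= n)%N -> P j n) ->
  exists N, forall j n, (1 <= j <= r)%N -> (N <= n)%N -> P j n.
Proof.
elim: r => [|r IH] evP.
  by exists 0%N => j n /andP[j_gt0 j_le0]; move: j_le0; rewrite leqNgt j_gt0.
have [N1 PN1] : exists N, forall j n, (1 <= j <= r)%N -> (N <= n)%N -> P j n.
  by apply: IH => j /andP[j_gt0 jr]; apply: evP; rewrite j_gt0 ltnW.
have [N2 PN2] := evP r.+1 (leqnn _).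
exists (maxn N1 N2) => j n /andP[j_gt0 jr]; rewrite geq_max => /andP[N1n N2n].
by case: (ltngtP j r.+1) jr => // [jr _|-> _]; [apply: PN1; rewrite ?j_gt0|apply: PN2].
Qed.

Lemma asymp_r_log_concave_of_poly_asymp w d r :
  poly_asymp w d.+2 r.*2.+1 -> asymp_r_log_concave r w.
Proof.
move=> wd; apply: eventually_forall_leq => j /andP[_ jr].
have [e we] := poly_asymp_Lhat_iter wd jr.
exact: poly_asymp_eventually_gt0 we.
Qed.

Lemma periodic_norm_bound (G : nat -> R) L : (0 < L)%N ->
  (forall n, G (n + L)%N = G n) -> forall n, `|G n| <= \sum_(i < L) `|G i|.
Proof.
move=> L_gt0 GL n.
have GqL (q m : nat) : G (m + q * L)%N = G m.
  by elim: q => [|q IH]; rewrite ?addn0 // mulSnr addnA GL IH.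
rewrite (divn_eq n L) addnC GqL (bigD1 (Ordinal (ltn_pmod n L_gt0))) //= lerDl.
exact: sumr_ge0.
Qed.

Lemma exprS_addX_leq (Y : R) e : 0 <= Y -> Y ^+ e.+1 + Y ^+ e <= (Y + 1) ^+ e.+1.
Proof.
move=> Y_ge0; rewrite exprSr [X in _ <= X]exprSr -[X in _ + X](mulr1 (Y ^+ e)) -mulrDr.
rewrite ler_wpM2r ?addr_ge0 //.
by apply: lerXn2r; rewrite ?nnegrE ?addr_ge0 // lerDl.
Qed.

Lemma norm_bound_of_shift_diff (G : nat -> R) L D e : (0 < L)%N -> 0 <= D ->
  (forall x, `|G (x + L)%N - G x| <= D * x.+1%:R ^+ e) ->
  exists C, forall n, `|G n| <= C * n.+1%:R ^+ e.+1.
Proof.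
move=> L_gt0 D_ge0 GLD; set B := \sum_(i < L) `|G i|.
have B_ge0 : 0 <= B by apply: sumr_ge0.
have GB n : `|G n| <= B + D * n.+1%:R ^+ e.+1.
  elim/ltn_ind: n => n IH; case: (ltnP n L) => [nL|Ln].
    rewrite /B (bigD1 (Ordinal nL)) //= -addrA lerDl addr_ge0 ?sumr_ge0 //.
    by rewrite mulr_ge0 ?exprn_ge0.
  have [x Dn] : exists x, n = (x + L)%N by exists (n - L)%N; rewrite subnK.
  have Gx : `|G x| <= B + D * x.+1%:R ^+ e.+1 by apply: IH; lia.
  have GLx := GLD x; rewrite Dn.
  have tri : `|G (x + L)%N| <= `|G x| + `|G (x + L)%N - G x|.
    by rewrite -{1}(subrK (G x) (G (x + L)%N)) addrC ler_normD.
  have xLe : x.+1%:R ^+ e.+1 + x.+1%:R ^+ e <= (x + L).+1%:R ^+ e.+1 :> R.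
    apply: le_trans (exprS_addX_leq _ (ler0n _ _)) _.
    by apply: lerXn2r; rewrite ?nnegrE ?addr_ge0 // natr1 ler_nat; lia.
  have := ler_wpM2l D_ge0 xLe; rewrite mulrDr; lra.
exists (B + D) => n; apply: le_trans (GB n) _.
by rewrite mulrDl lerD2r ler_peMr // exprn_ege1 // ler1n.
Qed.

(* Solutions of [geom_poly L ^+ m.+1 (E) G = 0] are quasi-polynomials of degree
   [< m.+1] and period [L]: they grow at most like [n ^ m]. *)
Lemma diffop_geom_poly_exp_bound L m (G : nat -> R) : (0 < L)%N ->
  (forall n, diffop (geom_poly R L ^+ m.+1) G n = 0) ->
  exists C, forall n, `|G n| <= C * n.+1%:R ^+ m.
Proof.
have shiftL H x : H (x + L)%N - H x = diffop ('X - 1) (diffop (geom_poly R L) H) x.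
  by rewrite -diffopM XB1_geom_poly diffopXnB1.
move=> L_gt0; elim: m G => [|m IH] G GLm.
  exists (\sum_(i < L) `|G i|) => n; rewrite expr0 mulr1.
  apply: periodic_norm_bound => // x; apply/eqP; rewrite -subr_eq0 shiftL.
  by rewrite diffopXB1 -[geom_poly R L]expr1 !GLm subrr.
have [C HC] : exists C, forall n, `|diffop (geom_poly R L) G n| <= C * n.+1%:R ^+ m.
  by apply: IH => n; rewrite -diffopM -exprSr.
have C_ge0 : 0 <= C by move: (HC 0%N); rewrite expr1n mulr1; apply: le_trans.
apply: (@norm_bound_of_shift_diff G L (C * (2%:R ^+ m + 1)) m) => //.
  by rewrite mulr_ge0 // addr_ge0 // exprn_ge0.
move=> x; rewrite shiftL diffopXB1; apply: le_trans (ler_normB _ _) _.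
have x2 : x.+2%:R ^+ m <= 2%:R ^+ m * x.+1%:R ^+ m :> R.
  rewrite -exprMn; apply: lerXn2r; rewrite ?nnegrE ?mulr_ge0 ?ler0n //.
  by rewrite -natrM ler_nat; lia.
rewrite mulrDr mulr1 mulrDl -mulrA lerD //.
exact: le_trans (HC _) (ler_wpM2l C_ge0 x2).
Qed.

Lemma coef_pos_of_growth (F : nat -> R) p d h L M : (0 < L)%N -> 0 < M ->
  (size p <= d.+2)%N -> near_poly F p d.+1 h.+1 ->
  (forall t, t.+1%:R ^+ d.+1 <= M * F (t * L)%N) -> 0 < p`_d.+1.
Proof.
move=> L_gt0 M_gt0 pd [C FpC] Fgrowth; have C_ge0 := near_poly_C_ge0 FpC.
rewrite ltNge; apply/negP => c_le0; set c := p`_d.+1 in c_le0.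
set q := p - c *: 'X^(d.+1).
have qd : (size q <= d.+1)%N.
  apply: size_leq_coef0; last by rewrite coefB coefZ coefXn eqxx mulr1 subrr.
  rewrite (leq_trans (size_polyD _ _)) // size_polyN geq_max pd /=.
  by rewrite (leq_trans (size_scale_leq _ _)) // size_polyXn.
have [K K_ge0 qK] := poly_nat_bound qd.
have F_le n : F n <= (K + C) * n.+1%:R ^+ d.
  set X := n.+1%:R : R; have X_gt0 : 0 < X by rewrite ltr0n.
  have Dp : p.[n%:R] = c * n%:R ^+ d.+1 + q.[n%:R].
    by rewrite /q hornerD hornerN hornerZ hornerXn addrC subrK.
  have cn : c * n%:R ^+ d.+1 <= 0 by rewrite mulr_le0_ge0 // exprn_ge0.
  have qn : q.[n%:R] <= K * X ^+ d := le_trans (ler_norm _) (qK n).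
  have Fpn : F n - p.[n%:R] <= C * X ^+ d.
    apply: le_trans (ler_norm _) _; rewrite -(ler_pM2r X_gt0) -mulrA -exprSr.
    by apply: le_trans (FpC n); rewrite ler_wpM2l // ler_eXnr // ler1n.
  rewrite mulrDl; lra.
have [t Bt] := eventually_nat_gt (M * ((K + C) * L%:R ^+ d)).
have := Bt t (leqnn t); have := Fgrowth t; have := F_le (t * L)%N.
set X := t.+1%:R : R; have X_gt0 : 0 < X by rewrite ltr0n.
have tLX : (t * L).+1%:R ^+ d <= L%:R ^+ d * X ^+ d :> R.
  rewrite -exprMn; apply: lerXn2r; rewrite ?nnegrE ?mulr_ge0 ?ler0n //.
  by rewrite /X -natrM ler_nat; nia.
move=> FtL XF; rewrite ltNge => /negP; apply.
rewrite -(ler_pM2r (exprn_gt0 d X_gt0)) -exprS; apply: le_trans XF _.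
rewrite -!mulrA ler_pM2l //; apply: le_trans FtL _.
by rewrite ler_wpM2l ?addr_ge0.
Qed.

End Asymptotics.

Section PartitionAsymptotics.
Variable R : archiRealFieldType.
Variable a : nat -> nat.
Hypothesis a_gt0 : forall i, (0 < a i)%N.

Lemma pA_poly_asymp r e : (2 * r < e.+3)%N ->
  (forall S : {set 'I_e.+3}, #|S| = (e.+3 - 2 * r)%N ->
     \big[gcdn/0%N]_(i in S) a i = 1%N) ->
  poly_asymp (pA_seq R a e.+3) e.+2 r.*2.+1.
Proof.
set k := e.+3 => rk gcd1; set L := (\prod_(i < k) a i)%N; set m := (k - 2 * r).-1.
have L_gt0 : (0 < L)%N by apply: prodn_gt0.
have aL (i : 'I_k) : (a i %| L)%N by rewrite /L (bigD1 i) //= dvdn_mulr.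
have s_bounds : (0 < k - 2 * r <= k)%N by rewrite subn_gt0 rk leq_subr.
have pA_ann := pA_seq_annihilator R a_gt0 L_gt0 aL s_bounds gcd1.
have [P [G [DF P_ann G_ann]]] :=
  diffop_coprime_split (coprimep_XB1_geom_poly R k m L_gt0) pA_ann.
have [p pk DP] := diffop_XB1_exp_eq0 P_ann.
have pAp : near_poly (pA_seq R a k) p e.+2 r.*2.+1.
  case Dm: m G_ann => [|m'] G_ann.
    exists 0 => n; have := G_ann n; rewrite expr0 diffop1 => G0.
    by rewrite DF DP G0 addr0 subrr normr0 !mul0r.
  have [C GC] := diffop_geom_poly_exp_bound L_gt0 G_ann; exists C => n.
  rewrite DF DP addrC addKr (_ : e.+2 = m' + r.*2.+1)%N; last by move: Dm; rewrite /m; lia.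
  by rewrite exprD mulrA ler_wpM2r ?exprn_ge0.
exists p => //; split=> //.
apply: (coef_pos_of_growth (L := L) (M := e.+2`!%:R)) pAp _ => //.
  by rewrite ltr0n fact_gt0.
move=> t; rewrite /pA_seq -natrX -natrM ler_nat.
by apply: expn_leq_fact_pA => // i ie; have := aL (@Ordinal k i ie).
Qed.

End PartitionAsymptotics.

Theorem theorem4p7 (a : nat -> nat) (r k : nat) :
  (forall i, 0 < a i)%N ->
  (forall i j, (i <= j)%N -> (a i <= a j)%N) ->
  (0 < r)%N ->
  (2 * r < k)%N ->
  (forall S : {set 'I_k}, #|S| = (k - 2 * r)%N ->
     \big[gcdn/0%N]_(i in S) a i = 1%N) ->
  asymp_r_log_concave r (fun n => (pA a k n)%:R : rat).
Proof.
move=> a_gt0 _ r_gt0 rk gcd1.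
have [e Dk] : exists e, k = e.+3 by exists (k - 3)%N; lia.
subst k; apply: asymp_r_log_concave_of_poly_asymp.
exact: pA_poly_asymp.
Qed.
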